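(* Let $(X_{1,\infty},f_{1,\infty})$ be a topological nonautonomous dynamical system with an $f_{1,\infty}$-invariant sequence $\mu_{1,\infty}$ of Borel probability measures. If $f_{1,\infty}$ is equicontinuous, then the Misiurewicz class $\mathcal{E}_{\mathrm{M}}$ is an admissible class.
   Context: Topological NDS: compact metric spaces $(X_n,\varrho_n)$ and continuous maps $f_n:X_n\to X_{n+1}$; $f_k^n=f_{k+n-1}\circ\cdots\circ f_k$, $f_k^{-n}$ = preimage under $f_k^n$. Invariance: $f_n\mu_n=\mu_{n+1}$. Equicontinuity: for every $\varepsilon>0$ there is $\delta>0$ with $\varrho_{n+1}(f_n x,f_n y)<\varepsilon$ whenever $\varrho_n(x,y)<\delta$, for all $n$ and $x,y\in X_n$. Admissible class: a nonempty class $\mathcal{E}$ of sequences $\{\mathcal{P}_n\}$ of finite Borel partitions of $X_n$ such that (A) each member has $\#\mathcal{P}_n\le N$ for some $N$ and all $n$; (B) $\mathcal{E}$ is closed under passing to termwise coarser sequences; (C) if $\mathcal{P}_{1,\infty}\in\mathcal{E}$ and $m\ge1$ then $\{\bigvee_{i=0}^{m-1}f_k^{-i}\mathcal{P}_{k+i}\}_{k\ge1}\in\mathcal{E}$. Misiurewicz class $\mathcal{E}_{\mathrm{M}}$: the set of sequences $\{\mathcal{P}_n\}$ of finite Borel partitions $\mathcal{P}_n=\{P_{n,1},\dots,P_{n,k_n}\}$ with $\sup_nk_n<\infty$ such that for every $\varepsilon>0$ there exist $\delta>0$ and compact sets $C_{n,i}\subset P_{n,i}$ with, for all $n$: (a)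 $\mu_n(P_{n,i}\setminus C_{n,i})\le\varepsilon$ for all $i$; (b) $\varrho_n(x,y)\ge\delta$ for all $x\in C_{n,i}$, $y\in C_{n,j}$, $i\neq j$. *)

From HB Require Import structures.
From mathcomp Require Import all_boot all_order all_algebra.
From mathcomp Require Import all_classical all_reals all_analysis.
Set Implicit Arguments. Unset Strict Implicit. Unset Printing Implicit Defensive.
Import Order.TTheory GRing.Theory Num.Theory.
Local Open Scope classical_set_scope.
Local Open Scope ring_scope.

(* Metric spaces that are also pointed (needed to equip them with the Borel
   sigma-algebra via g_sigma_algebraType; harmless since each X_n carries a
   probability measure, hence is nonempty). *)
#[short(type="pointedMetricType")]
HB.structure Definition PointedMetric (K : numDomainType) :=
  { M of Metric K M & isPointed M }.

Definition borelT {R : realType} (T : pointedMetricType R) :=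
  g_sigma_algebraType (@open T).

Section Defs.
Context {R : realType}.

Definition borel_set (T : pointedMetricType R) (A : set T) : Prop :=
  @measurable _ (borelT T) A.

Definition fin_borel_partition (T : pointedMetricType R) (P : set (set T)) :=
  [/\ finite_set P,
      (forall A, P A -> borel_set A),
      (forall A B, P A -> P B -> A <> B -> A `&` B = set0) &
      \bigcup_(A in P) A = setT].

Definition refines (T : Type) (P Q : set (set T)) :=
  forall A, P A -> exists2 B, Q B & A `<=` B.

Variable X : nat -> pointedMetricType R.
Variable f : forall n, X n -> X n.+1.

Fixpoint fcomp (k i : nat) : X k -> X (i + k)%N :=
  match i as i0 return X k -> X (i0 + k)%N with
  | 0 => fun x => x
  | i'.+1 => fun x => @f (i' + k)%N (@fcomp k i' x)
  end.

Definition pseq := forall n, set (set (X n)).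

(* { \bigvee_{i=0}^{m-1} f_k^{-i} P_{k+i} }_k *)
Definition join_seq (P : pseq) (m : nat) : pseq := fun k =>
  [set A | exists g : forall i, set (X (i + k)%N),
     (forall i, (i < m)%N -> P (i + k)%N (g i)) /\
     A = \bigcap_(i in `I_m) (@fcomp k i @^-1` g i)].

Definition admissible (E : set pseq) : Prop :=
  [/\ E !=set0,
      (forall P, E P -> forall n, fin_borel_partition (P n)),
      (forall P, E P -> exists N : nat, forall n, (P n #<= `I_N)%card),
      (forall P Q, E P -> (forall n, fin_borel_partition (Q n)) ->
          (forall n, refines (P n) (Q n)) -> E Q) &
      (forall P m, E P -> (1 <= m)%N -> E (join_seq P m))].

Variable mu : forall n, probability (borelT (X n)) R.

Definition misiurewicz_class : set pseq :=
  [set P | [/\ forall n, fin_borel_partition (P n),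
     exists N : nat, forall n, (P n #<= `I_N)%card &
     forall eps : R, 0 < eps -> exists2 delta : R, 0 < delta &
       exists C : forall n, set (X n) -> set (X n), forall n,
         (forall A, P n A ->
            [/\ C n A `<=` A, compact (C n A) &
                (mu n (A `\` C n A) <= eps%:E)%E]) /\
         (forall A B, P n A -> P n B -> A <> B ->
            forall x y, C n A x -> C n B y -> delta <= mdist x y)]].

End Defs.

Definition equicontinuous_nds {R : realType} (X : nat -> pointedMetricType R)
  (f : forall n, X n -> X n.+1) : Prop :=
  forall eps : R, 0 < eps -> exists2 delta : R, 0 < delta &
    forall n (x y : X n), mdist x y < delta -> mdist (f n x) (f n y) < eps.

From HB Require Import structures.
From mathcomp Require Import all_boot all_order all_algebra.
From mathcomp Require Import all_classical all_reals all_analysis.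
Import Order.TTheory GRing.Theory Num.Theory.
Local Open Scope classical_set_scope.
Local Open Scope ring_scope.

(* The compact cores pass to coarser partitions and to joins.  For a coarser
   partition, the core of a block is the union of the cores of the (at most N)
   finer blocks it contains, so it misses at most N times the old measure bound.
   For the m-fold join, the block \bigcap_(i < m) f_k^-i g_i gets the core
   \bigcap_(i < m) f_k^-i C(g_i): invariance of the measures bounds its missing
   measure by m times the old bound, and two distinct blocks differ at a level
   i < m where the cores are delta-apart, so the joined cores stay apart by the
   equicontinuity of the iterates f_k^i, uniform in k. *)

Lemma card_le_II_image {T : Type} {S : set T} (F : nat -> T) {N : nat} :
  S `<=` F @` `I_N -> (S #<= `I_N)%card.
Proof. by move=> SF; apply: card_le_trans (subset_card_le SF) (card_image_le _ _). Qed.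

Lemma card_le_II_enum {T : Type} {S : set T} {N : nat} :
  (S #<= `I_N)%card -> S !=set0 -> exists F : nat -> T, S = F @` `I_N.
Proof.
move=> /ocard_geP/surjPex[g gS] [x0 Sx0].
exists (fun j => if pselect (S (odflt x0 (g j))) is left _ then odflt x0 (g j) else x0).
apply/seteqP; split => [x Sx|_ [j _ <-]]; last by case: pselect.
have [j jN gj] := gS (Some x) (ex_intro2 _ _ x Sx erefl).
by exists j => //; rewrite gj /=; case: pselect.
Qed.

Lemma card_le_setI_image {T : Type} {A B : set (set T)} {a b : nat} :
  (A #<= `I_a)%card -> (B #<= `I_b)%card ->
  ([set U `&` V | U in A & V in B] #<= `I_(a * b))%card.
Proof.
move=> Aa Bb.
have [->|/set0P A0] := eqVneq A set0.
  by apply: (card_le_II_image (fun=> set0)) => _ [? []].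
have [->|/set0P B0] := eqVneq B set0.
  by apply: (card_le_II_image (fun=> set0)) => _ [? _ [? []]].
have [F ->] := card_le_II_enum Aa A0.
have [G ->] := card_le_II_enum Bb B0.
apply: (card_le_II_image (fun j => F (j %/ b)%N `&` G (j %% b)%N)).
move=> _ [_ [i ia <-] [_ [j jb <-] <-]].
have b0 : (0 < b)%N by apply: leq_ltn_trans jb.
exists (i * b + j)%N; last by rewrite /= divnMDl // divn_small // addn0 modnMDl modn_small.
rewrite /= (@leq_trans (i.+1 * b)) ?leq_mul2r ?ia ?orbT //.
by rewrite mulSn addnC ltn_add2r.
Qed.

Lemma le_content_bigcup_card {R : realType} {d} {U : semiRingOfSetsType d}
    (nu : {content set U -> \bar R}) {I : Type} {D : set I} (G : I -> set U)
    {N : nat} {e : R} :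
  (D #<= `I_N)%card -> 0 <= e ->
  (forall i, D i -> measurable (G i)) -> (forall i, D i -> (nu (G i) <= e%:E)%E) ->
  forall A, measurable A -> A `<=` \bigcup_(i in D) G i ->
  (nu A <= (N%:R * e)%:E)%E.
Proof.
move=> DN e0 mG Ge A mA AG.
have [D0|/set0P DN0] := eqVneq D set0.
  have -> : A = set0 by rewrite -subset0 -(bigcup_set0 G) -D0.
  by rewrite measure0 lee_fin mulr_ge0.
have [F DF] := card_le_II_enum DN DN0.
have FD j : (j < N)%N -> D (F j) by move=> jN; rewrite DF; exists j.
have AF : A `<=` \big[setU/set0]_(j < N) G (F j).
  rewrite -(bigcup_mkord N (G \o F)) => x /AG [B].
  by rewrite DF => -[j jN <-] Gx; exists j.
apply: le_trans (content_subadditive nu (fun j jN => mG _ (FD j jN)) mA AF) _.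
apply: (le_trans (y := (\sum_(j < N) e%:E)%E)); first by apply: lee_sum => j _; apply/Ge/FD.
by rewrite sumEFin sumr_const card_ord mulr_natl.
Qed.

Lemma mulr_natl_divS_le {R : realFieldType} {N : nat} {eps : R} :
  0 <= eps -> N%:R * (eps / N.+1%:R) <= eps.
Proof.
move=> eps0; rewrite mulrCA ler_piMr // ler_pdivrMr ?ltr0Sn // mul1r.
by rewrite ler_nat.
Qed.

Section BorelPartitions.
Context {R : realType} {T : pointedMetricType R}.
Implicit Types P Q : set (set T).

Lemma fin_borel_partition_uniq {Q A B x} :
  fin_borel_partition Q -> Q A -> Q B -> A x -> B x -> A = B.
Proof.
case=> _ _ QI _ QA QB Ax Bx; apply: contrapT => /(QI _ _ QA QB) AB0.
by have : (A `&` B) x by []; rewrite AB0.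
Qed.

Lemma fin_borel_partition_cover {Q} x :
  fin_borel_partition Q -> exists2 A, Q A & A x.
Proof.
by case=> _ _ _ QT; have : (\bigcup_(A in Q) A) x by rewrite QT.
Qed.

Lemma fin_borel_partition_borel {Q A} : fin_borel_partition Q -> Q A -> borel_set A.
Proof. by case=> _ + _ _; apply. Qed.

Lemma fin_borel_partition_neq0 {Q} : fin_borel_partition Q -> Q !=set0.
Proof. by move=> /(fin_borel_partition_cover point)[A QA _]; exists A. Qed.

Lemma refines_card_le {P Q N} :
  fin_borel_partition P -> fin_borel_partition Q -> refines P Q ->
  (P #<= `I_N)%card -> (Q #<= `I_N.+1)%card.
Proof.
move=> hP hQ PQ PN.
have [h hh] : {h : set T -> set T & forall A, P A -> Q (h A) /\ A `<=` h A}.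
  apply: (@choice _ _ (fun A B => P A -> Q B /\ A `<=` B)) => A.
  have [PA|nPA] := pselect (P A); last by exists A.
  by have [B QB AB] := PQ A PA; exists B.
have [F PF] := card_le_II_enum PN (fin_borel_partition_neq0 hP).
apply: (card_le_II_image (fun j => if (j < N)%N then h (F j) else set0)).
move=> B QB; have [->|/set0P[x Bx]] := eqVneq B set0.
  by exists N => //=; rewrite ltnn.
have [A PA Ax] := fin_borel_partition_cover x hP.
have [QhA AhA] := hh A PA.
move: PA; rewrite PF => -[j jN FjA]; exists j; first exact: ltnW.
by rewrite /= jN FjA (fin_borel_partition_uniq hQ QhA QB (AhA _ Ax) Bx).
Qed.

Lemma open_borel_set {A : set T} : open A -> borel_set A.
Proof. exact: sub_gen_smallest. Qed.

Lemma closed_borel_set {A : set T} : closed A -> borel_set A.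
Proof.
move=> cA; rewrite -[A]setCK; apply: (@measurableC _ (borelT T)).
by apply: open_borel_set; rewrite openC.
Qed.

Lemma metric_compact_closed {A : set T} : compact A -> closed A.
Proof. exact: compact_closed (@metric_hausdorff _ T). Qed.

Lemma compact_borel_set {A : set T} : compact A -> borel_set A.
Proof. by move=> /metric_compact_closed/closed_borel_set. Qed.

Lemma continuous_borel_preimage {U : pointedMetricType R} {g : T -> U} :
  continuous g -> forall B, borel_set B -> borel_set (g @^-1` B).
Proof.
move=> cg B mB.
have mg : @measurable_fun _ _ (borelT T) (borelT U) setT g.
  apply: (@measurability _ _ (borelT T) (borelT U) setT g (@open U)) => //.
  move=> _ [C oC <-]; rewrite setTI; apply: open_borel_set.
  exact: (proj1 (continuousP g)).
by have := mg (@measurableT _ (borelT T)) B mB; rewrite setTI.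
Qed.

Variable nu : probability (borelT T) R.

Definition separated_cores Q (eps delta : R) (C : set T -> set T) :=
  (forall A, Q A -> [/\ C A `<=` A, compact (C A) & (nu (A `\` C A) <= eps%:E)%E]) /\
  (forall A B, Q A -> Q B -> A <> B -> forall x y, C A x -> C B y -> delta <= mdist x y).

Definition coarse_core P (C : set T -> set T) (B : set T) : set T :=
  \bigcup_(A in [set A | P A /\ A `<=` B]) C A.

Lemma coarse_separated_cores {P Q N} {e eps delta : R} {C : set T -> set T} :
  compact [set: T] -> fin_borel_partition P -> fin_borel_partition Q ->
  refines P Q -> (P #<= `I_N)%card -> 0 <= e -> N%:R * e <= eps ->
  separated_cores P e delta C -> separated_cores Q eps delta (coarse_core P C).
Proof.
move=> cT hP hQ PQ PN e0 Ne [hC Csep].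
have in_block B A x : Q B -> P A -> A x -> B x -> A `<=` B.
  move=> QB PA Ax Bx; have [B' QB' AB'] := PQ A PA.
  by rewrite (fin_borel_partition_uniq hQ QB QB' Bx (AB' _ Ax)).
split=> [B QB|B B' QB QB' BB' x y [A [PA AB] Cx] [A' [PA' AB'] Cy]].
  have sub_card : ([set A | P A /\ A `<=` B] #<= `I_N)%card.
    by apply: card_le_trans PN; apply: subset_card_le => A [].
  have Ccl : closed (coarse_core P C B).
    apply: closed_bigcup.
      by case: hP => Pfin _ _ _; apply: sub_finite_set Pfin => A [].
    by move=> A [PA _]; have [_ cCA _] := hC A PA; exact: metric_compact_closed.
  split.
  - by move=> x [A [PA AB] CAx]; have [CA _ _] := hC A PA; exact/AB/CA.
  - exact: subclosed_compact Ccl cT (subsetT _).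
  apply: (le_trans (y := (N%:R * e)%:E)); last by rewrite lee_fin.
  apply: (le_content_bigcup_card nu (fun A => A `\` C A) sub_card e0).
  - move=> A [PA _]; apply: (@measurableD _ (borelT T)).
      exact: fin_borel_partition_borel hP PA.
    by have [_ cCA _] := hC A PA; exact: compact_borel_set.
  - by move=> A [PA _]; have [_ _] := hC A PA.
  - apply: (@measurableD _ (borelT T)); first exact: fin_borel_partition_borel hQ QB.
    exact: closed_borel_set.
  move=> x [Bx nCx]; have [A PA Ax] := fin_borel_partition_cover x hP.
  have AB := in_block B A x QB PA Ax Bx.
  by exists A => //; split => // CAx; apply: nCx; exists A.
have [CA _ _] := hC A PA.
suff AA' : A <> A' by exact: Csep PA PA' AA' x y Cx Cy.
move=> AA'; apply: BB'; have Ax := CA _ Cx.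
by apply: fin_borel_partition_uniq hQ QB QB' (AB _ Ax) _; rewrite AA' in Ax; exact: AB'.
Qed.

End BorelPartitions.

Section Dynamics.
Context {R : realType} {X : nat -> pointedMetricType R} (f : forall n, X n -> X n.+1).
Local Notation fc k i := (@fcomp _ X f k i).
Local Notation join P m k := (@join_seq _ X f P m k).

Lemma fcomp_continuous : (forall n, continuous (f n)) ->
  forall k i, continuous (fc k i).
Proof.
move=> fC k; elim=> [|i IH] x /=; first exact: cvg_id.
exact: continuous_comp (IH x) (fC _ _).
Qed.

Lemma equicontinuous_fcomp : equicontinuous_nds f ->
  forall i (eps : R), 0 < eps -> exists2 delta : R, 0 < delta &
    forall k (x y : X k), mdist x y < delta -> mdist (fc k i x) (fc k i y) < eps.
Proof.
move=> fE; elim=> [|i IH] eps eps0; first by exists eps.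
have [d1 d10 h1] := fE eps eps0; have [d d0 h] := IH d1 d10.
by exists d => // k x y /h /h1.
Qed.

Lemma uniformly_equicontinuous_fcomp : equicontinuous_nds f ->
  forall m (eps : R), 0 < eps -> exists2 delta : R, 0 < delta &
    forall i k (x y : X k), (i < m)%N -> mdist x y < delta ->
      mdist (fc k i x) (fc k i y) < eps.
Proof.
move=> fE m eps eps0; elim: m => [|m [d d0 IH]]; first by exists 1.
have [d' d'0 h'] := equicontinuous_fcomp fE m eps eps0.
exists (Num.min d d'); first by rewrite lt_min d0 d'0.
move=> i k x y; rewrite ltnS leq_eqVlt lt_min => /orP[/eqP->|im] /andP[xd xd'].
  exact: h'.
exact: IH.
Qed.

Lemma neq_bigcap_fcomp {m k} {g h : forall i, set (X (i + k)%N)} :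
  \bigcap_(i in `I_m) fc k i @^-1` g i <> \bigcap_(i in `I_m) fc k i @^-1` h i ->
  exists2 i, (i < m)%N & g i <> h i.
Proof.
move=> gh; apply: contrapT => hg; apply: gh; apply: eq_bigcapr => i im.
by congr (_ @^-1` _); apply: contrapT => ne; apply: hg; exists i.
Qed.

Lemma join_seqS (P : pseq X) m k :
  join P m.+1 k `<=`
  [set U `&` V | U in join P m k & V in preimage (fc k m) @` P (m + k)%N].
Proof.
move=> _ [g [hg ->]]; exists (\bigcap_(i in `I_m) fc k i @^-1` g i).
  by exists g; split => // i im; apply/hg/ltnW.
exists (fc k m @^-1` g m); first by exists (g m) => //; apply: hg.
by rewrite IISl bigcap_setU1 setIC.
Qed.

Lemma join_seq_card_le {P : pseq X} {N} : (forall n, (P n #<= `I_N)%card) ->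
  forall m k, (join P m k #<= `I_(N ^ m))%card.
Proof.
move=> PN; elim=> [|m IH] k.
  apply: (card_le_II_image (fun=> setT)) => _ [g [_ ->]].
  by exists 0%N => //; rewrite II0 bigcap_set0.
apply: card_le_trans (subset_card_le (join_seqS P m k)) _.
rewrite expnSr; apply: card_le_setI_image (IH k) _.
exact: card_le_trans (card_image_le _ _) (PN _).
Qed.

Lemma borel_bigcap_fcomp m k (g : forall i, set (X (i + k)%N)) :
  (forall n, continuous (f n)) -> (forall i, (i < m)%N -> borel_set (g i)) ->
  borel_set (\bigcap_(i in `I_m) fc k i @^-1` g i).
Proof.
move=> fC mg; apply: fin_bigcap_measurable; first exact: finite_II.
by move=> i im; apply: continuous_borel_preimage (mg i im); exact: fcomp_continuous.
Qed.

Lemma join_seq_partition {P : pseq X} {N} :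
  (forall n, continuous (f n)) -> (forall n, fin_borel_partition (P n)) ->
  (forall n, (P n #<= `I_N)%card) ->
  forall m k, fin_borel_partition (join P m k).
Proof.
move=> fC hP PN m k; split.
- by apply/finite_set_leP; exists (N ^ m)%N; exact: join_seq_card_le.
- move=> _ [g [hg ->]]; apply: borel_bigcap_fcomp fC _ => i im.
  exact: fin_borel_partition_borel (hP _) (hg i im).
- move=> _ _ [g [hg ->]] [h [hh ->]] /neq_bigcap_fcomp[i im ghi].
  apply/seteqP; split => // x [gx hx]; apply: ghi.
  exact: fin_borel_partition_uniq (hP _) (hg i im) (hh i im) (gx i im) (hx i im).
apply/seteqP; split => // x _.
pose g i := s2val (cid2 (fin_borel_partition_cover (fc k i x) (hP (i + k)%N))).
have gP i : P (i + k)%N (g i) /\ g i (fc k i x).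
  by rewrite /g; case: cid2.
exists (\bigcap_(i in `I_m) fc k i @^-1` g i); last by move=> i _; case: (gP i).
by exists g; split => // i _; case: (gP i).
Qed.

Lemma fcomp_preimage_measure (mu : forall n, probability (borelT (X n)) R) :
  (forall n, continuous (f n)) ->
  (forall n (B : set (X n.+1)), borel_set B -> mu n (f n @^-1` B) = mu n.+1 B) ->
  forall k i (B : set (X (i + k)%N)), borel_set B ->
    mu k (fc k i @^-1` B) = mu (i + k)%N B.
Proof.
move=> fC fI k; elim=> [//|i IH] B mB.
by rewrite -[RHS]fI // -IH //; exact: continuous_borel_preimage.
Qed.

(* No representation of [A] as an intersection is chosen here; [join_coreE]
   computes the core from any such representation. *)
Definition join_core (P : pseq X) (C : forall n, set (X n) -> set (X n)) m k
    (A : set (X k)) : set (X k) :=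
  A `&` \bigcap_(i in `I_m) fc k i @^-1` \bigcup_(B in P (i + k)%N) C (i + k)%N B.

Lemma join_coreE (P : pseq X) C m k (g : forall i, set (X (i + k)%N)) :
  (forall n, fin_borel_partition (P n)) ->
  (forall i, (i < m)%N -> forall B, P (i + k)%N B -> C (i + k)%N B `<=` B) ->
  (forall i, (i < m)%N -> P (i + k)%N (g i)) ->
  join_core P C m k (\bigcap_(i in `I_m) fc k i @^-1` g i) =
  \bigcap_(i in `I_m) fc k i @^-1` C (i + k)%N (g i).
Proof.
move=> hP CP hg; apply/seteqP; split => x.
  move=> [gx Cx] i im; have [B PB CBx] := Cx i im.
  by rewrite -(fin_borel_partition_uniq (hP _) PB (hg i im) (CP i im B PB _ CBx) (gx i im)).
move=> Cx; split=> i im; first exact: CP (hg i im) _ (Cx i im).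
by exists (g i); [exact: hg | exact: Cx].
Qed.

Section JoinCores.
Variables (mu : forall n, probability (borelT (X n)) R) (P : pseq X)
  (C : forall n, set (X n) -> set (X n)) (m k : nat) (e d : R).
Hypothesis compactX : forall n, compact [set: X n].
Hypothesis continuous_f : forall n, continuous (f n).
Hypothesis invariant_mu :
  forall n (B : set (X n.+1)), borel_set B -> mu n (f n @^-1` B) = mu n.+1 B.
Hypothesis partitionP : forall n, fin_borel_partition (P n).
Hypothesis coresC :
  forall i, (i < m)%N -> separated_cores (mu (i + k)%N) (P (i + k)%N) e d (C (i + k)%N).

Let core_sub {i} : (i < m)%N -> forall B, P (i + k)%N B -> C (i + k)%N B `<=` B.
Proof. by move=> im B PB; have [] := (coresC i im).1 B PB. Qed.

Let core_compact {i B} : (i < m)%N -> P (i + k)%N B -> compact (C (i + k)%N B).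
Proof. by move=> im PB; have [] := (coresC i im).1 B PB. Qed.

Lemma closed_join_core {g : forall i, set (X (i + k)%N)} :
  (forall i, (i < m)%N -> P (i + k)%N (g i)) ->
  closed (join_core P C m k (\bigcap_(i in `I_m) fc k i @^-1` g i)).
Proof.
move=> hg; rewrite join_coreE //; apply: closed_bigI => i im.
apply: (continuous_closedP _).1 (fcomp_continuous continuous_f k i) _ _.
exact: metric_compact_closed (core_compact im (hg i im)).
Qed.

Lemma join_core_measure_le {g : forall i, set (X (i + k)%N)} :
  (forall i, (i < m)%N -> P (i + k)%N (g i)) -> 0 <= e ->
  (mu k ((\bigcap_(i in `I_m) fc k i @^-1` g i) `\`
          join_core P C m k (\bigcap_(i in `I_m) fc k i @^-1` g i)) <= (m%:R * e)%:E)%E.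
Proof.
move=> hg e0; have Ccl := closed_join_core hg; rewrite join_coreE // in Ccl *.
have mgC i : (i < m)%N -> borel_set (g i `\` C (i + k)%N (g i)).
  move=> im; apply: (@measurableD _ (borelT _)).
    exact: fin_borel_partition_borel (partitionP _) (hg i im).
  exact: compact_borel_set (core_compact im (hg i im)).
have mu_gC i : (i < m)%N ->
    (mu k (fc k i @^-1` (g i `\` C (i + k)%N (g i))) <= e%:E)%E.
  move=> im; rewrite (fcomp_preimage_measure mu continuous_f invariant_mu _ _ _ (mgC i im)).
  by have [] := (coresC i im).1 _ (hg i im).
apply: (le_content_bigcup_card (mu k) _ (card_lexx `I_m) e0 _ mu_gC).
- move=> i im; apply: continuous_borel_preimage (mgC i im).
  exact: fcomp_continuous.
- apply: (@measurableD _ (borelT _)); last exact: closed_borel_set.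
  apply: borel_bigcap_fcomp continuous_f _ => i im.
  exact: fin_borel_partition_borel (partitionP _) (hg i im).
move=> x [gx nCx].
have [i im nCi] : exists2 i, (i < m)%N & ~ C (i + k)%N (g i) (fc k i x).
  apply: contrapT => nE; apply: nCx => i im.
  by apply: contrapT => nCi; apply: nE; exists i.
by exists i => //; split; [exact: gx | exact: nCi].
Qed.

Lemma join_separated_cores {eps delta : R} :
  (forall i (x y : X k), (i < m)%N -> mdist x y < delta -> mdist (fc k i x) (fc k i y) < d) ->
  0 <= e -> m%:R * e <= eps ->
  separated_cores (mu k) (join P m k) eps delta (join_core P C m k).
Proof.
move=> hd e0 me.
split=> [_ [g [hg ->]]|_ _ [g [hg ->]] [h [hh ->]] gh x y].
  split.
  - by rewrite join_coreE // => x Cx i im; exact: core_sub im _ (hg i im) _ (Cx i im).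
  - exact: subclosed_compact (closed_join_core hg) (compactX k) (subsetT _).
  - by apply: le_trans (join_core_measure_le hg e0) _; rewrite lee_fin.
rewrite !join_coreE // => Cx Cy; have [i im ghi] := neq_bigcap_fcomp gh.
rewrite leNgt; apply/negP => /(hd i x y im); rewrite ltNge.
by rewrite ((coresC i im).2 _ _ (hg i im) (hh i im) ghi _ _ (Cx i im) (Cy i im)).
Qed.

End JoinCores.

End Dynamics.

Section Misiurewicz.
Context {R : realType} (X : nat -> pointedMetricType R) (f : forall n, X n -> X n.+1)
  (mu : forall n, probability (borelT (X n)) R).
Hypothesis compactX : forall n, compact [set: X n].

Lemma misiurewicz_trivial : misiurewicz_class mu (fun n => [set setT]).
Proof.
split.
- move=> n; split => [|A ->|A B -> ->|]; last by rewrite bigcup_set1.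
  + exact: finite_set1.
  + exact: (@measurableT _ (borelT (X n))).
  + by [].
- by exists 1%N => n; apply: (card_le_II_image (fun=> setT)) => A ->; exists 0%N.
move=> eps eps0; exists 1 => //; exists (fun n A => A) => n.
split=> [A ->|A B -> -> //]; split => //.
by rewrite setDv measure0 lee_fin ltW.
Qed.

Lemma misiurewicz_coarser (P Q : pseq X) :
  misiurewicz_class mu P -> (forall n, fin_borel_partition (Q n)) ->
  (forall n, refines (P n) (Q n)) -> misiurewicz_class mu Q.
Proof.
move=> [hP [N PN] hM] hQ PQ; split => //.
  by exists N.+1 => n; exact: refines_card_le (hP n) (hQ n) (PQ n) (PN n).
move=> eps eps0; have e0 : 0 < eps / N.+1%:R by rewrite divr_gt0.
have [d d0 [C hC]] := hM _ e0.
exists d => //; exists (fun n => coarse_core (P n) (C n)) => n.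
apply: coarse_separated_cores (compactX n) (hP n) (hQ n) (PQ n) (PN n) (ltW e0) _ (hC n).
exact: mulr_natl_divS_le (ltW eps0).
Qed.

Hypothesis continuous_f : forall n, continuous (f n).
Hypothesis invariant_mu :
  forall n (B : set (X n.+1)), borel_set B -> mu n (f n @^-1` B) = mu n.+1 B.
Hypothesis equicontinuous_f : equicontinuous_nds f.

Lemma misiurewicz_join (P : pseq X) m :
  misiurewicz_class mu P -> misiurewicz_class mu (join_seq f P m).
Proof.
move=> [hP [N PN] hM]; split.
- exact: (join_seq_partition f continuous_f hP PN m).
- by exists (N ^ m)%N; exact: (join_seq_card_le f PN m).
(* Dividing by m.+1 rather than m makes the argument work for m = 0 too. *)
move=> eps eps0; have e0 : 0 < eps / m.+1%:R by rewrite divr_gt0.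
have [d d0 [C hC]] := hM _ e0.
have [delta delta0 hdelta] := uniformly_equicontinuous_fcomp f equicontinuous_f m d d0.
exists delta => //; exists (join_core f P C m) => k.
apply: (join_separated_cores f mu P C m k _ _ compactX continuous_f invariant_mu hP
  (fun i _ => hC (i + k)%N) (fun i x y => hdelta i k x y) (ltW e0)).
exact: mulr_natl_divS_le (ltW eps0).
Qed.

End Misiurewicz.

Theorem mainTheorem7 (R : realType) (X : nat -> pointedMetricType R)
  (f : forall n, X n -> X n.+1)
  (mu : forall n, probability (borelT (X n)) R) :
  (forall n, compact [set: X n]) ->
  (forall n, continuous (f n)) ->
  (forall n (B : set (X n.+1)), borel_set B ->
      mu n (f n @^-1` B) = mu n.+1 B) ->
  equicontinuous_nds f ->
  admissible f (misiurewicz_class mu).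
Proof.
move=> compactX continuous_f invariant_mu equicontinuous_f; split.
- by exists (fun n => [set setT]); exact: misiurewicz_trivial.
- by move=> P [].
- by move=> P [].
- by move=> P Q; exact: misiurewicz_coarser.
- by move=> P m hP _; exact: misiurewicz_join.
Qed.
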